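(* Let $(\mathcal{X},\|\cdot\|)$ be a real Banach space, $\mathcal{E}$ a measurable space, $Q,P_e:\mathcal{X}\to\mathcal{X}$ with $\|Q(\theta_1)-Q(\theta_2)\|\le\rho\|\theta_1-\theta_2\|$ ($\rho\in[0,1)$, $\theta^\star$ the unique fixed point of $Q$) and $\|P_e(\theta_1)-P_e(\theta_2)\|\le L\|\theta_1-\theta_2\|$ for all $e$ ($L\ge0$). Let $P(\cdot\mid\theta)$ be a probability kernel from $\mathcal{X}$ to $\mathcal{E}$, $\theta_0\in\mathcal{X}$, and let $e_t$ be drawn from $P(\cdot\mid\theta_t)$ independently of $\mathcal{F}_t:=\sigma(e_0,\dots,e_{t-1})$ given $\theta_t$, with $\theta_{t+1}=Q(P_{e_t}(\theta_t))$. Let $W_e:=\|P_e(\theta^\star)-\theta^\star\|$ and assume there are $0\le\sigma\le M$ with $\int W_e\,P(de\mid\theta)\le\sigma$ and $\operatorname{ess\,sup}_{e\sim P(\cdot\mid\theta)}W_e\le M$ for every $\theta\in\mathcal{X}$. Let $\gamma:=\rho L$ and $u_t:=\mathbb{E}\|\theta_t-\theta^\star\|$. Then: (i) if $\gamma<1$, $u_t\le\gamma^tu_0+\rho\sigma\frac{1-\gamma^t}{1-\gamma}$; (ii) $\mathbb{E}[\Omega(\theta_t;e_t)]\le2\gamma u_t+(1+\rho)\sigma$; (iii) if $\sigma=0$ and $\gamma<1$, then almost surely $\|\theta_t-\theta^\star\|\le\gamma^t\|\theta_0-\theta^\star\|$ and $\Omega(\theta_t;e_t)\le2\gamma^{t+1}\|\theta_0-\theta^\star\|$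 for all $t$.
   Context: The order-gap is $\Omega(\theta;e):=\|Q(P_e(\theta))-P_e(Q(\theta))\|$. *)

From HB Require Import structures.
From mathcomp Require Import all_boot all_order all_algebra.
From mathcomp Require Import all_classical all_reals all_analysis.
From mathcomp Require Import measurable_realfun.
Set Implicit Arguments. Unset Strict Implicit. Unset Printing Implicit Defensive.
Import Order.TTheory GRing.Theory Num.Theory.
Import numFieldNormedType.Exports.
Local Open Scope classical_set_scope.
Local Open Scope ring_scope.

Definition borel_set (X : topologicalType) : set (set X) := <<s @open X >>.

Definition prob_kernel_measurable (R : realType) (X : topologicalType)
  (dE : measure_display) (E : measurableType dE) (K : X -> probability E R) : Prop :=
  forall A : set E, measurable A ->
  forall B : set (\bar R), @measurable _ (\bar R) B -> borel_set ((fun th => K th A) @^-1` B).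

(* F_t := sigma(e_0, ..., e_{t-1}) (the trivial sigma-algebra for t = 0). *)
Definition filtration (dO dE : measure_display) (Omega : measurableType dO)
  (E : measurableType dE) (e : nat -> Omega -> E) (t : nat) : set (set Omega) :=
  <<s [set C | exists s, (s < t)%N /\ exists A : set E, measurable A /\ C = e s @^-1` A] >>.

Fixpoint traj (X Omega E : Type) (Q : X -> X) (P : E -> X -> X)
  (e : nat -> Omega -> E) (th0 : X) (t : nat) (w : Omega) : X :=
  match t with
  | 0 => th0
  | t'.+1 => Q (P (e t' w) (traj Q P e th0 t' w))
  end.

Definition order_gap (R : realType) (X : normedModType R) (E : Type)
  (Q : X -> X) (P : E -> X -> X) (th : X) (e : E) : R :=
  `| Q (P e th) - P e (Q th) |.

From HB Require Import structures.
From mathcomp Require Import all_boot all_order all_algebra.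
From mathcomp Require Import all_classical all_reals all_analysis.
From mathcomp Require Import measurable_realfun ess_sup_inf giry.
From mathcomp Require Import ring lra.
Set Implicit Arguments. Unset Strict Implicit. Unset Printing Implicit Defensive.
Import Order.TTheory GRing.Theory Num.Theory.
Import numFieldNormedType.Exports.
Local Open Scope classical_set_scope.
Local Open Scope ring_scope.

(* With d_t := ||theta_t - theta*|| and W := W_{e_t}, the contraction of Q, the
   Lipschitz continuity of P_e and Q theta* = theta* give, pointwise,
     d_{t+1} <= gamma d_t + rho W  and  Omega(theta_t; e_t) <= 2 gamma d_t + (1 + rho) W.
   Given theta_t, e_t has law P(. | theta_t), so E[W] = E[int W dP(. | theta_t)] <= sigma.
   Taking expectations gives (ii) and u_{t+1} <= gamma u_t + rho sigma, which
   unrolls to (i).  If sigma = 0 then W_{e_t} = 0 almost surely for all t, and the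
   pointwise bounds iterate to (iii). *)

Section nonneg_integral.
Context (R : realType) (d : measure_display) (T : measurableType d)
  (mu : {measure set T -> \bar R}).
Local Open Scope ereal_scope.

(* Unlike [ge0_le_integral], no measurability is assumed: the order gap need not
   be measurable. *)
Lemma ge0_le_integralT (f g : T -> \bar R) :
  (forall x, 0 <= f x) -> (forall x, f x <= g x) ->
  \int[mu]_x f x <= \int[mu]_x g x.
Proof.
move=> f0 fg; have g0 x : 0 <= g x by exact: le_trans (f0 x) (fg x).
rewrite !ge0_integralTE//; apply: ereal_sup_le => _ [h /= hf <-].
by exists h => //= x; exact: le_trans (hf x) (fg x).
Qed.

Lemma ge0_integralDZ (f g : T -> R) (a b : R) :
  (0 <= a)%R -> (0 <= b)%R -> (forall x, 0 <= f x)%R -> (forall x, 0 <= g x)%R ->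
  measurable_fun setT f -> measurable_fun setT g ->
  \int[mu]_x (a * f x + b * g x)%:E
  = a%:E * \int[mu]_x (f x)%:E + b%:E * \int[mu]_x (g x)%:E.
Proof.
move=> a0 b0 f0 g0 mf mg.
under eq_integral do rewrite EFinD.
rewrite ge0_integralD//; first last.
- by apply/measurable_EFinP; exact: measurable_funM.
- by move=> x _; rewrite lee_fin mulr_ge0.
- by apply/measurable_EFinP; exact: measurable_funM.
- by move=> x _; rewrite lee_fin mulr_ge0.
under eq_integral do rewrite EFinM.
under [X in _ + X]eq_integral do rewrite EFinM.
by rewrite !ge0_integralZl//; do ?[exact/measurable_EFinP | move=> x _; rewrite lee_fin].
Qed.

Lemma ge0_integral_le_affine (h f g : T -> R) (a b s : R) :
  (forall x, h x <= a * f x + b * g x)%R -> \int[mu]_x (g x)%:E <= s%:E ->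
  (0 <= a)%R -> (0 <= b)%R ->
  (forall x, 0 <= h x)%R -> (forall x, 0 <= f x)%R -> (forall x, 0 <= g x)%R ->
  measurable_fun setT f -> measurable_fun setT g ->
  \int[mu]_x (h x)%:E <= a%:E * \int[mu]_x (f x)%:E + (b * s)%:E.
Proof.
move=> hfg gs a0 b0 h0 f0 g0 mf mg.
apply: le_trans (ge0_le_integralT (f := fun x => (h x)%:E)
  (g := fun x => (a * f x + b * g x)%:E) _ _) _ => [x|x|]; rewrite ?lee_fin//.
rewrite ge0_integralDZ// leeD2l// EFinM.
by apply: lee_wpmul2l; rewrite ?lee_fin.
Qed.

Lemma ge0_integral_le0_ae (f : T -> R) :
  measurable_fun setT f -> (forall x, 0 <= f x)%R ->
  \int[mu]_x (f x)%:E <= 0 -> {ae mu, forall x, f x = 0%R}.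
Proof.
move=> mf f0 intf.
have : ae_eq mu setT (fun x => (f x)%:E) (cst 0).
  apply/(ae_eq_integral_abs _ measurableT _).1; first exact/measurable_EFinP.
  under eq_integral do rewrite gee0_abs ?lee_fin//.
  by apply/eqP; rewrite eq_le intf integral_ge0// => x _; rewrite lee_fin.
by apply: filterS => x /(_ Logic.I) [].
Qed.

End nonneg_integral.

Section borel_measurability.
Context (R : realType) (d : measure_display) (T : measurableType d).

Lemma borel_set_preimage_measurable (X : topologicalType) (f : T -> X) :
  (forall U, open U -> measurable (f @^-1` U)) ->
  forall B, borel_set B -> measurable (f @^-1` B).
Proof.
move=> fU B; apply: (@smallest_sub _ _ _ [set B | measurable (f @^-1` B)]) => //.
split => /=.
- by rewrite preimage_set0.
- by move=> A mA; rewrite setTD preimage_setC; exact: measurableC.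
- by move=> F mF; rewrite preimage_bigcup; exact: bigcupT_measurable.
Qed.

Lemma measurable_fun_normB (X : normedModType R) (f : T -> X) (c : X) :
  (forall U, open U -> measurable (f @^-1` U)) ->
  measurable_fun setT (fun w => `|f w - c|).
Proof.
move=> fU; apply: (measurability _ (RGenOpens.measurableE R)).
move=> _ [_ [a [b ->] <-]]; rewrite setTI.
have normB_cont : continuous (fun x : X => `|x - c|).
  move=> x; apply: (continuous_comp (f := fun x => x - c) (g := Num.norm)).
    exact: (cvgB cvg_id (cvg_cst c)).
  exact: norm_continuous.
exact: fU ((continuousP _).1 normB_cont _ (interval_open _ _)).
Qed.

End borel_measurability.

Section kernel_mixture.
Context (R : realType) (dE dO : measure_display) (E : measurableType dE)
  (Omega : measurableType dO).
Local Open Scope ereal_scope.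

Lemma measurable_kernel_comp (X : topologicalType) (K : X -> probability E R)
    (th : Omega -> X) :
  prob_kernel_measurable K -> (forall U, open U -> measurable (th @^-1` U)) ->
  measurable_fun setT (fun w => K (th w) : giry E R).
Proof.
move=> mK th_m; apply: measurable_giry_codensity => // A mA _ B mB.
by rewrite setTI; exact: borel_set_preimage_measurable (mK A mA B mB).
Qed.

Section mixture.
Variables (mu : probability Omega R) (k : Omega -> giry E R) (et : Omega -> E).
Hypotheses (mk : measurable_fun setT k) (met : measurable_fun setT et)
  (law_et : forall A, measurable A -> mu (et @^-1` A) = \int[mu]_w k w A).

Lemma ge0_integral_mixture (W : E -> \bar R) :
  measurable_fun setT W -> (forall x, 0 <= W x) ->
  \int[mu]_w W (et w) = \int[mu]_w \int[k w]_x W x.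
Proof.
move=> mW W0.
have -> : \int[mu]_w W (et w) = \int[pushforward mu et]_x W x.
  by rewrite ge0_integral_pushforward//= preimage_setT.
rewrite (eq_measure_integral (giry_bind (mu : giry Omega R) mk)); last first.
  move=> A mA _; rewrite /giry_bind /= giry_int_map//; last exact: measurable_giry_ev.
  by rewrite /pushforward law_et.
exact: giry_int_bind.
Qed.

Lemma integral_mixture_le (W : E -> R) (s : R) :
  measurable_fun setT W -> (forall x, 0 <= W x)%R ->
  (forall w, \int[k w]_x (W x)%:E <= s%:E) ->
  \int[mu]_w (W (et w))%:E <= s%:E.
Proof.
move=> mW W0 Ws.
rewrite (ge0_integral_mixture (W := fun x => (W x)%:E)) //; last first.
  exact/measurable_EFinP.
apply: le_trans (ge0_le_integralT mu (g := fun=> s%:E) _ Ws) _.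
  by move=> w; apply: integral_ge0 => x _; rewrite lee_fin.
by rewrite integral_cst// [X in _ * X]probability_setT mule1.
Qed.

End mixture.
End kernel_mixture.

Section contraction_step.
Context (R : realType) (X : normedModType R) (E : Type)
  (Q : X -> X) (P : E -> X -> X) (rho L : R) (thstar : X).
Hypotheses (rho0 : 0 <= rho) (L0 : 0 <= L)
  (Q_contr : forall th1 th2 : X, `| Q th1 - Q th2 | <= rho * `| th1 - th2 |)
  (Q_fix : Q thstar = thstar)
  (P_lip : forall (ee : E) (th1 th2 : X),
    `| P ee th1 - P ee th2 | <= L * `| th1 - th2 |).

Lemma dist_P_le ee th :
  `| P ee th - thstar | <= L * `| th - thstar | + `| P ee thstar - thstar |.
Proof.
rewrite -[P ee th - _](subrKA (P ee thstar)).
by apply: le_trans (ler_normD _ _) _; rewrite lerD2r.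
Qed.

Lemma dist_QP_fix_le ee th :
  `| Q (P ee th) - thstar |
  <= rho * L * `| th - thstar | + rho * `| P ee thstar - thstar |.
Proof.
rewrite -{1}Q_fix; apply: le_trans (Q_contr _ _) _.
by rewrite -mulrA -mulrDr ler_wpM2l// dist_P_le.
Qed.

Lemma order_gap_le ee th :
  order_gap Q P th ee
  <= 2 * (rho * L) * `| th - thstar | + (1 + rho) * `| P ee thstar - thstar |.
Proof.
rewrite /order_gap; have -> : Q (P ee th) - P ee (Q th)
    = (Q (P ee th) - thstar) - (P ee (Q th) - thstar).
  by rewrite opprB addrA subrK.
apply: le_trans (ler_normB _ _) _.
have PQ_le : `| P ee (Q th) - thstar |
    <= rho * L * `| th - thstar | + `| P ee thstar - thstar |.
  apply: le_trans (dist_P_le _ _) _; rewrite lerD2r [rho * L]mulrC -mulrA.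
  by rewrite ler_wpM2l// -{1}Q_fix; exact: Q_contr.
apply: le_trans (lerD (dist_QP_fix_le ee th) PQ_le) _.
by lra.
Qed.

End contraction_step.

Lemma affine_recurrence_le (R : realType) (a b : R) (u : nat -> \bar R) :
  0 <= a -> a != 1 -> (forall t, (u t.+1 <= a%:E * u t + b%:E)%E) ->
  forall t, (u t <= (a ^+ t)%:E * u 0%N + (b * ((1 - a ^+ t) / (1 - a)))%:E)%E.
Proof.
move=> a0 a1 u_rec; elim=> [|t IH].
  by rewrite expr0 mul1e subrr mul0r mulr0 adde0.
apply: le_trans (u_rec t) _.
apply: le_trans (leeD2r _ (lee_wpmul2l _ IH)) _; first by rewrite lee_fin.
rewrite muleDr ?fin_num_adde_defl// muleA -EFinM -exprS -addeA -EFinD leeD2l// lee_fin.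
have a1' : 1 - a != 0 by rewrite subr_eq0 eq_sym.
by rewrite le_eqVlt; apply/orP; left; apply/eqP; rewrite exprS; field.
Qed.

Lemma geometric_decay_le (R : realType) (a : R) (v : nat -> R) :
  0 <= a -> (forall t, v t.+1 <= a * v t) -> forall t, v t <= a ^+ t * v 0%N.
Proof.
move=> a0 v_rec; elim=> [|t IH]; first by rewrite expr0 mul1r.
by apply: le_trans (v_rec t) _; rewrite exprS -mulrA ler_wpM2l.
Qed.

Theorem theorem4p22 (R : realType) (X : completeNormedModType R)
  (dE : measure_display) (E : measurableType dE)
  (dO : measure_display) (Omega : measurableType dO) (Prob : probability Omega R)
  (Q : X -> X) (P : E -> X -> X) (rho L : R) (thstar : X)
  (K : X -> probability E R) (th0 : X) (e : nat -> Omega -> E) (sigma M : R) :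
  0 <= rho -> rho < 1 -> 0 <= L ->
  (forall th1 th2 : X, `| Q th1 - Q th2 | <= rho * `| th1 - th2 |) ->
  Q thstar = thstar -> (forall th : X, Q th = th -> th = thstar) ->
  (forall (ee : E) (th1 th2 : X), `| P ee th1 - P ee th2 | <= L * `| th1 - th2 |) ->
  prob_kernel_measurable K ->
  (* the e_t are random variables and the iterates theta_t are (Borel) random elements of X *)
  (forall t, measurable_fun setT (e t)) ->
  (forall t (U : set X), open U -> measurable (traj Q P e th0 t @^-1` U)) ->
  (* e_t ~ P(. | theta_t), conditionally on F_t = sigma(e_0, ..., e_{t-1}) *)
  (forall t (A : set E) (B : set Omega), measurable A -> filtration e t B ->
     Prob (B `&` e t @^-1` A)
     = (\int[Prob]_(w in B) K (traj Q P e th0 t w) A)%E) ->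
  (* W_e := norm of (P_e theta_star - theta_star) *)
  measurable_fun setT (fun ee : E => `| P ee thstar - thstar |) ->
  0 <= sigma -> sigma <= M ->
  (forall th : X, (\int[K th]_ee (`| P ee thstar - thstar |)%:E <= sigma%:E)%E) ->
  (forall th : X, (ess_sup (K th) (fun ee : E => (`| P ee thstar - thstar |)%:E)
                    <= M%:E)%E) ->
  let gamma := rho * L in
  let u := fun t : nat => (\int[Prob]_w (`| traj Q P e th0 t w - thstar |)%:E)%E in
  [/\ (* (i) *)
      (gamma < 1 -> forall t : nat,
         (u t <= (gamma ^+ t)%:E * u 0%N
                 + (rho * sigma * ((1 - gamma ^+ t) / (1 - gamma)))%:E)%E),
      (* (ii) *)
      (forall t : nat,
         (\int[Prob]_w (order_gap Q P (traj Q P e th0 t w) (e t w))%:E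
          <= (2 * gamma)%:E * u t + ((1 + rho) * sigma)%:E)%E) &
      (* (iii) *)
      (sigma = 0 -> gamma < 1 ->
         {ae Prob, forall w, forall t : nat,
            `| traj Q P e th0 t w - thstar | <= gamma ^+ t * `| th0 - thstar |
            /\ order_gap Q P (traj Q P e th0 t w) (e t w)
               <= 2 * gamma ^+ t.+1 * `| th0 - thstar |})].
Proof.
move=> rho0 _ L0 Q_contr Q_fix _ P_lip mK me mth law mW _ _ W_sigma _ gamma u.
set W := fun ee : E => `| P ee thstar - thstar |.
set th := traj Q P e th0.
have gamma0 : 0 <= gamma by rewrite mulr_ge0.
have W0 ee : 0 <= W ee := normr_ge0 _.
have mdist t : measurable_fun setT (fun w => `| th t w - thstar |).
  exact: measurable_fun_normB (mth t).
have mWe t : measurable_fun setT (fun w => W (e t w)) := measurableT_comp mW (me t).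
have EW t : (\int[Prob]_w (W (e t w))%:E <= sigma%:E)%E.
  have law_t A : measurable A ->
      Prob (e t @^-1` A) = (\int[Prob]_w K (th t w) A)%E.
    move=> mA; rewrite -[_ @^-1` A]setTI law// /filtration -[X in _ X](setD0 setT).
    by apply: sigma_algebraCD; exact: sigma_algebra0.
  apply: (integral_mixture_le (measurable_kernel_comp mK (mth t)) (me t) law_t) => //.
  by move=> w; have := W_sigma (th t w).
have step t w : `| th t.+1 w - thstar |
    <= gamma * `| th t w - thstar | + rho * W (e t w).
  exact: dist_QP_fix_le.
have gap t w : order_gap Q P (th t w) (e t w)
    <= 2 * gamma * `| th t w - thstar | + (1 + rho) * W (e t w).
  exact: order_gap_le.
split.
- move=> gamma1; apply: affine_recurrence_le => // [|t]; first by rewrite lt_eqF.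
  by apply: ge0_integral_le_affine (step t) (EW t) _ _ _ _ _ (mdist t) (mWe t).
- move=> t; apply: ge0_integral_le_affine (gap t) (EW t) _ _ _ _ _ (mdist t) (mWe t);
    rewrite ?mulr_ge0 ?addr_ge0// => w; exact: normr_ge0.
move=> sigma_eq0 _.
have W_ae0 t : {ae Prob, forall w, W (e t w) = 0}.
  by apply: ge0_integral_le0_ae => //; have := EW t; rewrite sigma_eq0.
apply: filterS (ae_foralln W_ae0) => w W_eq0 t.
have dist_le : `| th t w - thstar | <= gamma ^+ t * `| th0 - thstar |.
  apply: (geometric_decay_le (v := fun s => `| th s w - thstar |)) => // s.
  by have := step s w; rewrite W_eq0 mulr0 addr0.
split=> //; apply: le_trans (gap t w) _.
by rewrite W_eq0 mulr0 addr0 exprS -!mulrA !ler_wpM2l.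
Qed.
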